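(* Let $s=e^{2\pi i\theta}$ with $\theta$ irrational, let $\varepsilon>0$ and let $m$ be a positive integer. Then there exists $\delta>0$ such that for every $a$ with $|a|<1$ and $|s-a|<\delta$ we have $|Q_a^i(c_a)|>1-\varepsilon$ for all $i=0,1,\dots,m$.
   Context: For $|a|<1$, $Q_a(z)=z\frac{a-z}{1-\overline a z}$, and $c_a=\frac{a}{1+\sqrt{1-|a|^2}}$ is the unique critical point of $Q_a$ in the open unit disk. $Q_a^i$ denotes the $i$-th iterate. *)

From Stdlib Require Import Reals ZArith.
From Coquelicot Require Import Coquelicot.
Open Scope R_scope.

Definition expi2pi (theta : R) : C := (cos (2 * PI * theta), sin (2 * PI * theta)).

Definition Q (a z : C) : C := (z * (a - z) / (1 - Cconj a * z))%C.

Definition crit (a : C) : C := (a / RtoC (1 + sqrt (1 - (Cmod a) ^ 2)))%C.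

Definition Qiter (a : C) (i : nat) (z : C) : C := Nat.iter i (Q a) z.

Definition irrational (x : R) : Prop :=
  forall (p q : Z), q <> 0%Z -> x <> IZR p / IZR q.

From Stdlib Require Import Reals ZArith Lra Lia.
From Coquelicot Require Import Coquelicot.
Open Scope R_scope.

(* Write s = e^{2 pi i theta}. As a -> s inside the unit disk, c_a -> s, and
   Q_a(z) depends continuously on (a, z) wherever the denominator of Q_s does not
   vanish; on the unit circle Q_s(t) = s t away from its pole t = s. The pole sits
   exactly at the limit of c_a, so the first step uses the identity
   Q_a(c_a) = c_a^2 instead; afterwards the limit orbit s^2, s^3, ... never meets
   the pole because s is not a root of unity. Hence Q_a^i(c_a) -> s^(i+1), a point
   of modulus 1, for each of the finitely many i <= m. *)

Lemma Cmod_minus_sym (x y : C) : Cmod (x - y) = Cmod (y - x).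
Proof. now rewrite <- Cmod_opp, Copp_minus_distr. Qed.

Lemma filter_forall_le {T : Type} {F : (T -> Prop) -> Prop} {FF : Filter F}
  (P : nat -> T -> Prop) (m : nat) :
  (forall i, (i <= m)%nat -> F (P i)) -> F (fun x => forall i, (i <= m)%nat -> P i x).
Proof.
  induction m as [|m IH]; intros HP.
  - apply filter_imp with (P 0%nat); [|apply HP; lia].
    intros x Hx i Hi. now replace i with 0%nat by lia.
  - apply filter_imp with (fun x => (forall i, (i <= m)%nat -> P i x) /\ P (S m) x).
    + intros x [Hle HSm] i Hi.
      destruct (Nat.eq_dec i (S m)) as [->|Hne]; [exact HSm|apply Hle; lia].
    + apply filter_and; [apply IH; auto|apply HP; lia].
Qed.

Lemma filterlim_locally_Cmod {T : Type} {F : (T -> Prop) -> Prop} {FF : Filter F}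
  (f : T -> C) (l : C) :
  filterlim f F (locally l) <-> forall eps : posreal, F (fun x => Cmod (f x - l) < eps).
Proof.
  split.
  - intros Hf eps. apply (Hf (fun y => Cmod (y - l) < eps)).
    apply (locally_le_locally_norm l). now exists eps.
  - intros H. apply filterlim_locally. intros eps.
    apply filter_imp with (2 := H eps). intros x Hx.
    now apply (norm_compat1 (V := C_NormedModule)).
Qed.

Lemma within_locally_Cmod (D P : C -> Prop) (s : C) :
  within D (locally s) P ->
  exists delta, 0 < delta /\ forall a, D a -> Cmod (s - a) < delta -> P a.
Proof.
  intros H. destruct (locally_norm_le_locally s _ H) as [delta Hdelta].
  exists delta. split; [apply cond_pos|]. intros a Ha Hsa. apply Hdelta; [|exact Ha].
  change (Cmod (a - s) < delta). now rewrite Cmod_minus_sym.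
Qed.

Lemma continuous_Cconj (z : C) : continuous Cconj z.
Proof.
  apply filterlim_locally_Cmod. intros eps. apply (locally_le_locally_norm z).
  exists eps. intros w Hw. now rewrite <- Cminus_conj, Cmod_conj.
Qed.

Lemma continuous_RtoC (x : R) : continuous RtoC x.
Proof.
  apply filterlim_locally_Cmod. intros eps. exists eps. intros y Hy.
  now rewrite <- RtoC_minus, Cmod_R.
Qed.

Lemma continuous_Cinv (z : C) : z <> 0%C -> continuous Cinv z.
Proof.
  intros Hz. apply Cmod_gt_0 in Hz as Hmz. set (r := Cmod z) in *.
  apply filterlim_locally_Cmod. intros eps. apply (locally_le_locally_norm z).
  assert (Hdelta : 0 < Rmin (r / 2) (eps * r * r / 2)).
  { apply Rmin_pos; [lra|]. pose proof (cond_pos eps). apply Rdiv_lt_0_compat; [|lra].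
    apply Rmult_lt_0_compat; [apply Rmult_lt_0_compat|]; lra. }
  exists (mkposreal _ Hdelta). intros w Hw.
  change (Cmod (w - z) < Rmin (r / 2) (eps * r * r / 2)) in Hw.
  pose proof (Rmin_l (r / 2) (eps * r * r / 2)). pose proof (Rmin_r (r / 2) (eps * r * r / 2)).
  assert (Hw_lower : r / 2 < Cmod w).
  { pose proof (Cmod_triangle (z - w) w) as T. replace (z - w + w)%C with z in T by ring.
    rewrite Cmod_minus_sym in T. fold r in T. lra. }
  assert (Hw0 : (w : C) <> 0%C) by (apply Cmod_gt_0; lra).
  replace (/ w - / z)%C with ((z - w) / (w * z))%C by (field; auto).
  rewrite Cmod_div, Cmod_mult by (apply Cmult_neq_0; auto).
  rewrite Cmod_minus_sym. fold r.
  apply Rlt_le_trans with ((eps * r * r / 2) / (Cmod w * r)).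
  - unfold Rdiv. apply Rmult_lt_compat_r; [apply Rinv_0_lt_compat; nra|lra].
  - apply Rle_trans with ((eps * r * r / 2) / (r / 2 * r)).
    + unfold Rdiv. apply Rmult_le_compat_l; [pose proof (cond_pos eps); nra|].
      apply Rinv_le_contravar; nra.
    + right. field. lra.
Qed.

Section Complex_limits.

Context {T : Type} {F : (T -> Prop) -> Prop} {FF : Filter F}.
Variables (f g : T -> C) (l m : C).
Hypotheses (Hf : filterlim f F (locally l)) (Hg : filterlim g F (locally m)).

Lemma filterlim_Cplus : filterlim (fun x => f x + g x)%C F (locally (l + m)%C).
Proof. exact (filterlim_comp_2 _ _ _ Hf Hg (filterlim_plus (V := C_NormedModule) l m)). Qed.

Lemma filterlim_Copp : filterlim (fun x => - g x)%C F (locally (- m)%C).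
Proof. eapply filterlim_comp; [exact Hg|exact (filterlim_opp (V := C_NormedModule) m)]. Qed.

(* [C_UniformSpace] has product balls, whereas [filterlim_mult] is stated for the
   Cmod balls of [C_AbsRing]; both define the same neighbourhoods. *)
Lemma filterlim_C_AbsRing (h : T -> C) (z : C) :
  filterlim h F (locally z) <-> filterlim h F (@locally (AbsRing_UniformSpace C_AbsRing) z).
Proof.
  rewrite filterlim_locally_Cmod, (filterlim_locally (U := AbsRing_UniformSpace C_AbsRing)).
  reflexivity.
Qed.

Lemma filterlim_Cmult : filterlim (fun x => f x * g x)%C F (locally (l * m)%C).
Proof.
  apply filterlim_C_AbsRing.
  apply (filterlim_comp_2 _ _ _ (proj1 (filterlim_C_AbsRing f l) Hf)
    (proj1 (filterlim_C_AbsRing g m) Hg) (filterlim_mult (K := C_AbsRing) l m)).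
Qed.

End Complex_limits.

Lemma filterlim_Cminus {T : Type} {F : (T -> Prop) -> Prop} {FF : Filter F}
  (f g : T -> C) (l m : C) :
  filterlim f F (locally l) -> filterlim g F (locally m) ->
  filterlim (fun x => f x - g x)%C F (locally (l - m)%C).
Proof. intros Hf Hg. now apply filterlim_Cplus, filterlim_Copp. Qed.

Lemma filterlim_Q {T : Type} {F : (T -> Prop) -> Prop} {FF : Filter F}
  (a z : T -> C) (s t : C) :
  filterlim a F (locally s) -> filterlim z F (locally t) -> (1 - Cconj s * t <> 0)%C ->
  filterlim (fun x => Q (a x) (z x)) F (locally (Q s t)).
Proof.
  intros Ha Hz Hden. unfold Q, Cdiv.
  apply filterlim_Cmult; [apply filterlim_Cmult; [|apply filterlim_Cminus]; auto|].
  eapply filterlim_comp; [|now apply continuous_Cinv].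
  apply filterlim_Cminus; [apply filterlim_const|apply filterlim_Cmult; auto].
  eapply filterlim_comp; [exact Ha|apply continuous_Cconj].
Qed.

Lemma continuous_crit (a : C) : continuous crit a.
Proof.
  unfold crit, Cdiv. apply filterlim_Cmult; [apply filterlim_id|].
  eapply filterlim_comp; [|apply continuous_Cinv].
  - eapply filterlim_comp; [|apply continuous_RtoC].
    apply (continuous_plus (fun _ => 1) (fun b : C => sqrt (1 - Cmod b ^ 2)));
      [apply continuous_const|].
    apply (continuous_comp (fun b : C => 1 - Cmod b ^ 2) sqrt); [|apply continuous_sqrt].
    apply (continuous_minus (fun _ => 1)); [apply continuous_const|].
    apply (continuous_comp (fun b : C => Cmod b) (fun r => r ^ 2)).
    + exact (filterlim_norm (V := C_NormedModule) a).
    + apply (ex_derive_continuous (K := R_AbsRing) (V := R_NormedModule)). auto_derive; auto.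
  - pose proof (sqrt_pos (1 - Cmod a ^ 2)). intros Hzero.
    apply (f_equal Re) in Hzero. simpl in *. lra.
Qed.

Lemma crit_unit_circle (s : C) : Cmod s = 1 -> crit s = s.
Proof.
  intros Hs. unfold crit. rewrite Hs, pow1, Rminus_diag, sqrt_0, Rplus_0_r. field.
Qed.

Lemma Q_crit (a : C) : Cmod a < 1 -> Q a (crit a) = (crit a * crit a)%C.
Proof.
  intros Ha. pose proof (Cmod_ge_0 a).
  set (r := sqrt (1 - Cmod a ^ 2)).
  assert (Hr : 0 < r) by (apply sqrt_lt_R0; nra).
  assert (Hr2 : (Cconj a * a)%C = (1 - r * r)%C).
  { rewrite Cmult_comm, <- Cmod2_conj, <- RtoC_mult. unfold r. rewrite sqrt_sqrt by nra.
    rewrite RtoC_minus. ring. }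
  assert (Hr0 : RtoC r <> 0%C) by (intros Hz; apply (f_equal Re) in Hz; simpl in Hz; lra).
  assert (Hr1 : (1 + RtoC r)%C <> 0%C)
    by (intros Hz; apply (f_equal Re) in Hz; simpl in Hz; lra).
  assert (Hcrit : crit a = (a / (1 + r))%C) by (unfold crit; now rewrite RtoC_plus).
  assert (Hden : (1 - Cconj a * crit a)%C = r).
  { rewrite Hcrit.
    replace (Cconj a * (a / (1 + r)))%C with (Cconj a * a / (1 + r))%C by now field.
    rewrite Hr2. now field. }
  assert (Hnum : (a - crit a)%C = (r * crit a)%C) by (rewrite Hcrit; now field).
  unfold Q. rewrite Hden, Hnum. now field.
Qed.

Lemma Q_rotation (s t : C) : (Cconj s * s = 1)%C -> (1 - Cconj s * t <> 0)%C ->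
  Q s t = (s * t)%C.
Proof.
  intros Hs Ht. unfold Q.
  assert (Hden : (1 - Cconj s * t)%C = (Cconj s * (s - t))%C) by (rewrite <- Hs; ring).
  rewrite Hden in *.
  assert (Hs0 : Cconj s <> 0%C) by (intros Hz; rewrite Hz, Cmult_0_l in Hs; now apply C1_nz).
  assert (Hst : (s - t)%C <> 0%C) by (intros Hz; rewrite Hz, Cmult_0_r in Ht; auto).
  transitivity (t * (s - t) * (Cconj s * s) / (Cconj s * (s - t)))%C.
  - now rewrite Hs, Cmult_1_r.
  - now field.
Qed.

Section Critical_orbit.

Variable s : C.
Hypothesis s_unit : Cmod s = 1.
Hypothesis s_not_root_of_unity : forall k, (1 <= k)%nat -> (s ^ k <> 1)%C.

Lemma Qiter_crit_cvg (i : nat) :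
  filterlim (fun a => Qiter a i (crit a)) (within (fun a => Cmod a < 1) (locally s))
    (locally (s ^ S i)%C).
Proof.
  assert (Hconj : (Cconj s * s = 1)%C).
  { rewrite Cmult_comm, <- Cmod2_conj, s_unit, pow1. reflexivity. }
  assert (Hcrit : filterlim crit (within (fun a => Cmod a < 1) (locally s)) (locally s)).
  { eapply filterlim_filter_le_1; [apply filter_le_within|].
    rewrite <- (crit_unit_circle s) at 2 by exact s_unit. apply continuous_crit. }
  induction i as [|[|i] IH].
  - now rewrite Cpow_1_r.
  - apply filterlim_within_ext with (fun a => crit a * crit a)%C.
    + intros a Ha. symmetry. now apply Q_crit.
    + rewrite Cpow_S, Cpow_1_r. now apply filterlim_Cmult.
  - assert (Hden : (1 - Cconj s * s ^ S (S i) <> 0)%C).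
    { rewrite Cpow_S, Cmult_assoc, Hconj, Cmult_1_l. intros Hz.
      apply (s_not_root_of_unity (S i)); [lia|].
      symmetry. now apply Ceq_minus. }
    rewrite Cpow_S, <- Q_rotation by assumption.
    apply (filterlim_Q (fun a => a)); [|exact IH|exact Hden].
    eapply filterlim_filter_le_1; [apply filter_le_within|apply filterlim_id].
Qed.

End Critical_orbit.

Lemma Cmod_expi2pi (x : R) : Cmod (expi2pi x) = 1.
Proof.
  unfold expi2pi, Cmod; simpl. rewrite !Rmult_1_r, Rplus_comm, <- !Rsqr_def, sin2_cos2.
  apply sqrt_1.
Qed.

Lemma expi2pi_pow (theta : R) (k : nat) : (expi2pi theta ^ k)%C = expi2pi (INR k * theta).
Proof.
  induction k as [|k IH].
  - unfold expi2pi. simpl. rewrite !Rmult_0_l, Rmult_0_r, cos_0, sin_0. reflexivity.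
  - rewrite Cpow_S, IH, S_INR. unfold expi2pi, Cmult; simpl.
    replace (2 * PI * ((INR k + 1) * theta))
      with (2 * PI * theta + 2 * PI * (INR k * theta)) by ring.
    rewrite cos_plus, sin_plus. f_equal; ring.
Qed.

Lemma expi2pi_pow_neq_1 (theta : R) (k : nat) :
  irrational theta -> (1 <= k)%nat -> (expi2pi theta ^ k <> 1)%C.
Proof.
  intros Hirr Hk Hpow. rewrite expi2pi_pow in Hpow.
  apply (f_equal Im) in Hpow. simpl in Hpow.
  destruct (sin_eq_0_0 _ Hpow) as [n Hn].
  apply (Hirr n (2 * Z.of_nat k)%Z); [lia|].
  rewrite mult_IZR, <- INR_IZR_INZ.
  assert (0 < INR k) by (apply lt_0_INR; lia). pose proof PI_RGT_0.
  apply Rmult_eq_reg_l with (2 * PI * INR k); [|nra].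
  replace (2 * PI * INR k * theta) with (IZR n * PI) by lra. field. lra.
Qed.

Theorem lemma4p5 (theta : R) (eps : R) (m : nat) :
  irrational theta -> 0 < eps -> (1 <= m)%nat ->
  exists delta : R, 0 < delta /\
    forall a : C, Cmod a < 1 -> Cmod (expi2pi theta - a)%C < delta ->
      forall i : nat, (i <= m)%nat -> Cmod (Qiter a i (crit a)) > 1 - eps.
Proof.
  intros Hirr Heps _.
  set (s := expi2pi theta).
  assert (Hs : Cmod s = 1) by apply Cmod_expi2pi.
  apply within_locally_Cmod, filter_forall_le. intros i _.
  apply filter_imp with (fun a => Cmod (Qiter a i (crit a) - s ^ S i) < eps).
  - intros a Ha. set (z := Qiter a i (crit a)) in *.
    pose proof (Cmod_triangle (s ^ S i - z) z) as Htri.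
    replace (s ^ S i - z + z)%C with (s ^ S i)%C in Htri by ring.
    rewrite Cmod_pow, Hs, pow1, Cmod_minus_sym in Htri. lra.
  - apply filterlim_locally_Cmod with (eps := mkposreal eps Heps).
    apply Qiter_crit_cvg; [exact Hs|]. intros k Hk. now apply expi2pi_pow_neq_1.
Qed.
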